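(* Let $(G,w)$ be a weighted trigraph and let $(A,B,C)$ be a cut-partition of $G$ such that $C=\{c_1,c_2\}$ is a stable set of size two of $G$. For each $X\in\{A,B\}$ let $G_X$ be the trigraph on $X\cup C$ in which $c_1c_2$ is semi-adjacent and all other adjacencies are as in $G[X\cup C]$. For every $C'\subseteq C$ set $\alpha_{A\cup C'}=\alpha(\mathrm{Red}[G_A,w;A\cup C'])+\mathrm{Ext}[G_A,w;A\cup C']$. Define $w_B:D(G_B)\to\mathbb N$ by $w_B(c_1)=\alpha_{A\cup C}-w(c_2)$, $w_B(c_2)=w(c_2)$, $w_B(c_1,c_2)=\alpha_{A\cup\{c_1\}}-\alpha_{A\cup C}+w(c_2)$, $w_B(c_2,c_1)=\alpha_{A\cup\{c_2\}}-w(c_2)$, $w_B(c_1c_2)=\alpha_A$, and $w_B(p)=w(p)$ for all $p\in D(G_B)\setminus D(G_B[C])$. Then $w_B$ is a weight function for $G_B$ (in particular all these values are non-negative), and $\alpha(G_B,w_B)=\alpha(G,w)$.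
   Context: A trigraph $G$ consists of a finite vertex set $V(G)$ and an adjacency function $\theta_G:\binom{V(G)}{2}\to\{-1,0,1\}$; for distinct $u,v$ write $uv$ for $\{u,v\}$. The pair $uv$ is strongly adjacent if $\theta_G(uv)=1$, semi-adjacent if $\theta_G(uv)=0$, strongly anti-adjacent if $\theta_G(uv)=-1$; $u,v$ are anti-adjacent if $\theta_G(uv)\le 0$. A stable set is a set of pairwise anti-adjacent vertices. For $X\subseteq V(G)$, $G[X]$ is the trigraph on $X$ with the restricted adjacency function. A cut-partition of $G$ is a partition $(A,B,C)$ of $V(G)$ with $A,B$ non-empty ($C$ possibly empty) such that every vertex of $A$ is strongly anti-adjacent to every vertex of $B$. $\mathbb N$ denotes the non-negative integers. For a trigraph $G$ let $D(G)=V(G)\cup\{(u,v):u,v\in V(G),u\neq v\}\cup\binom{V(G)}{2}$. A weight function for $G$ is a map $w:D(G)\to\mathbb N$ such that for all distinct $u,v$: if $uv$ is not semi-adjacent then $w(u,v)=w(v,u)=w(uv)=0$, and $w(u,v)\le w(uv)$. A weighted trigraph is a pair $(G,w)$ with $w$ a weight function for $G$; for an induced subtrigraph $H$, $(H,w)$ denotes $(H,w|_{D(H)})$; note $w$ restricted to $D(G_A)$ is a weight function for $G_A$. The weight of $S\subseteq V(G)$ is $\llbracket S\rrbracket_{(G,w)}=\sum_{u\in S}w(u)+\sum_{u\in S}\sum_{v\in V(G)\setminus S}w(u,v)+\sum_{uv\in\binom{V(G)\setminus S}{2}}w(uv)$, and $\alpha(G,w)=\max\{\llbracket S\rrbracket_{(G,w)}: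 S \text{ a stable set of } G\}$. For $R\subseteq V(G)$, the reduction $\mathrm{Red}[G,w;R]$ is the weighted trigraph $(G[R],w')$ where $w'(u)=\max\{w(u)-\sum_{v\in V(G)\setminus R}(w(uv)-w(u,v)),0\}$ for $u\in R$, and $w'(u,v)=w(u,v)$, $w'(uv)=w(uv)$ for distinct $u,v\in R$. The exterior weight is $\mathrm{Ext}[G,w;R]=\sum_{uv\in\binom{V(G)\setminus R}{2}}w(uv)+\sum_{u\in R}\sum_{v\in V(G)\setminus R}w(uv)$. *)

(* Weights are int-valued; "w : D(G) -> N" is encoded as
   int-valued maps together with non-negativity (part of is_weight). *)
From HB Require Import structures.
From mathcomp Require Import all_boot all_order all_algebra.
Set Implicit Arguments. Unset Strict Implicit. Unset Printing Implicit Defensive.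
Import Order.TTheory GRing.Theory Num.Theory.
Local Open Scope ring_scope.

(* A trigraph on a finite universe T: vertex set tV and an adjacency
   function on unordered pairs, represented as 2-element sets {u,v}. *)
Record trigraph (T : finType) := Trigraph {
  tV : {set T};
  tadj : {set T} -> int }.

Definition is_trigraph (T : finType) (G : trigraph T) : Prop :=
  forall u v, u \in tV G -> v \in tV G -> u != v ->
    -1 <= tadj G [set u; v] <= 1.

(* A weighting: w(u) for vertices, w(u,v) for ordered pairs, w(uv) for
   unordered pairs (2-element sets). *)
Record weights (T : finType) := Weights {
  wv : T -> int;
  wo : T -> T -> int;
  wu : {set T} -> int }.

Definition is_weight (T : finType) (G : trigraph T) (w : weights T) : Prop :=
  (forall u, u \in tV G -> 0 <= wv w u) /\
  (forall u v, u \in tV G -> v \in tV G -> u != v ->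
     [/\ 0 <= wo w u v, 0 <= wu w [set u; v],
         wo w u v <= wu w [set u; v] &
         (tadj G [set u; v] != 0 -> wo w u v = 0 /\ wu w [set u; v] = 0)]).

Definition stable (T : finType) (G : trigraph T) (S : {set T}) : bool :=
  (S \subset tV G) &&
  [forall u in S, forall v in S, (u != v) ==> (tadj G [set u; v] <= 0)].

Definition wset (T : finType) (G : trigraph T) (w : weights T) (S : {set T}) : int :=
  \sum_(u in S) wv w u
  + \sum_(u in S) \sum_(v in tV G :\: S) wo w u v
  + \sum_(e : {set T} | (e \subset tV G :\: S) && (#|e| == 2)%N) wu w e.

(* alpha(G,w); the default 0 is harmless since weights are non-negative
   and the empty set is stable. *)
Definition alpha (T : finType) (G : trigraph T) (w : weights T) : int :=
  \big[Num.max/0]_(S : {set T} | stable G S) wset G w S.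

Definition induced (T : finType) (G : trigraph T) (X : {set T}) : trigraph T :=
  Trigraph X (tadj G).

Definition red_w (T : finType) (G : trigraph T) (w : weights T) (R : {set T}) : weights T :=
  Weights (fun u => Num.max (wv w u - \sum_(v in tV G :\: R) (wu w [set u; v] - wo w u v)) 0)
          (wo w) (wu w).

Definition Ext (T : finType) (G : trigraph T) (w : weights T) (R : {set T}) : int :=
  \sum_(e : {set T} | (e \subset tV G :\: R) && (#|e| == 2)%N) wu w e
  + \sum_(u in R) \sum_(v in tV G :\: R) wu w [set u; v].

Definition alpha_red (T : finType) (G : trigraph T) (w : weights T) (R : {set T}) : int :=
  alpha (induced G R) (red_w G w R) + Ext G w R.

Definition cut_partition (T : finType) (G : trigraph T) (A B C : {set T}) : Prop :=
  [/\ A :|: B :|: C = tV G,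
      [&& [disjoint A & B], [disjoint A & C] & [disjoint B & C]],
      A != set0, B != set0 &
      forall a b, a \in A -> b \in B -> tadj G [set a; b] = -1].

Definition GX (T : finType) (G : trigraph T) (X : {set T}) (c1 c2 : T) : trigraph T :=
  Trigraph (X :|: [set c1; c2])
           (fun e => if e == [set c1; c2] then 0 else tadj G e).

Definition wB (T : finType) (G : trigraph T) (w : weights T) (A : {set T}) (c1 c2 : T)
  : weights T :=
  let GA := GX G A c1 c2 in
  let aAC := alpha_red GA w (A :|: [set c1; c2]) in
  let aA1 := alpha_red GA w (A :|: [set c1]) in
  let aA2 := alpha_red GA w (A :|: [set c2]) in
  let aA := alpha_red GA w A in
  Weights (fun u => if u == c1 then aAC - wv w c2
                    else if u == c2 then wv w c2 else wv w u)
          (fun u v => if (u == c1) && (v == c2) then aA1 - aAC + wv w c2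
                      else if (u == c2) && (v == c1) then aA2 - wv w c2
                      else wo w u v)
          (fun e => if e == [set c1; c2] then aA else wu w e).

From HB Require Import structures.
From mathcomp Require Import all_boot all_order all_algebra.
From mathcomp Require Import ring lra.
Import Order.TTheory GRing.Theory Num.Theory.
Local Open Scope ring_scope.
Set Implicit Arguments. Unset Strict Implicit. Unset Printing Implicit Defensive.

(* Every vertex of A is strongly anti-adjacent to every vertex of B, so no weight is
   carried between A and B, and the weight of a stable set S of G is the weight of
   S :&: (A :|: C) in G_A plus the weight of S :&: (B :|: C) once everything carried
   inside C is cleared.  The reduction computes the best A-sides: alpha_(A :|: C') is the
   largest weight of a stable set of G_A inside A :|: C'.  The weighting w_B is chosen so
   that the weight of C' in (G_B[C], w_B) is exactly alpha_(A :|: C').  Hence the weight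
   of a stable set Y of (G_B, w_B) is that of its B-side plus the best A-side compatible
   with Y :&: C, and the two alphas are compared by splitting and gluing stable sets
   along C.  That w_B is a weight function comes from alpha_(R :|: [set u]) <=
   alpha_R + w(u) and w(c1) + w(c2) <= alpha_(A :|: C). *)

Section WeightedSets.

Variable T : finType.
Implicit Types (B C V X Y Z S : {set T}) (w : weights T) (f : {set T} -> int).

Lemma sum_setU X Y (F : T -> int) : [disjoint X & Y] ->
  \sum_(i in X :|: Y) F i = \sum_(i in X) F i + \sum_(i in Y) F i.
Proof. by move=> dXY; rewrite -bigU //; apply: eq_bigl => i; rewrite !inE. Qed.

Lemma subset_set2_cases (x y : T) Z : Z \subset [set x; y] ->
  [\/ Z = set0, Z = [set x], Z = [set y] | Z = [set x; y]].
Proof.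
move=> sZ; have Zxy z : z \in Z -> (z == x) || (z == y) by move/(subsetP sZ); rewrite !inE.
case xZ: (x \in Z); case yZ: (y \in Z).
- by apply: Or44; apply/eqP; rewrite eqEsubset sZ subUset !sub1set xZ yZ.
- apply: Or42; apply/setP => z; rewrite inE; apply/idP/eqP => [zZ|-> //].
  by case/orP: (Zxy z zZ) => /eqP ez //; rewrite ez yZ in zZ.
- apply: Or43; apply/setP => z; rewrite inE; apply/idP/eqP => [zZ|-> //].
  by case/orP: (Zxy z zZ) => /eqP ez //; rewrite ez xZ in zZ.
- apply: Or41; apply/setP => z; rewrite inE; apply/negbTE/negP => zZ.
  by case/orP: (Zxy z zZ) => /eqP ez; rewrite ez ?xZ ?yZ in zZ.
Qed.

Lemma eq_set2 (x y u v : T) : u != v -> [set u; v] = [set x; y] ->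
  ((u == x) && (v == y)) || ((u == y) && (v == x)).
Proof.
move=> uv E; have : u \in [set x; y] by rewrite -E !inE eqxx.
have : v \in [set x; y] by rewrite -E !inE eqxx orbT.
rewrite !inE => /orP[] /eqP ev /orP[] /eqP eu; subst; rewrite ?eqxx ?orbT //.
all: by rewrite eqxx in uv.
Qed.

Definition pairsum X f : int :=
  \sum_(e : {set T} | (e \subset X) && (#|e| == 2)%N) f e.

Lemma pairsum_small X f : (#|X| <= 1)%N -> pairsum X f = 0.
Proof.
move=> leX1; rewrite /pairsum big_pred0 // => e; apply/negP => /andP[sX /eqP c2].
by have := leq_trans (subset_leq_card sX) leX1; rewrite c2.
Qed.

Lemma pairsum_pair (x y : T) f : x != y -> pairsum [set x; y] f = f [set x; y].
Proof.
move=> xy; rewrite /pairsum (big_pred1 [set x; y]) // => e /=.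
apply/andP/eqP => [[sX /eqP c2]|->]; last by rewrite cards2 xy.
by apply/eqP; rewrite eqEcard sX c2 cards2 xy.
Qed.

Lemma sum_mixed_pairs X Y f : [disjoint X & Y] ->
  \sum_(e : {set T} |
         [&& e \subset X :|: Y, #|e| == 2, ~~ (e \subset X) & ~~ (e \subset Y)]) f e
  = \sum_(x in X) \sum_(y in Y) f [set x; y].
Proof.
move=> dXY; have XnY x : x \in X -> x \in Y = false by move=> xX; rewrite (disjointFr dXY xX).
have YnX y : y \in Y -> y \in X = false by move=> yY; rewrite (disjointFl dXY yY).
pose XY := [pred p : T * T | (p.1 \in X) && (p.2 \in Y)].
rewrite pair_big_dep /= -[RHS]/(\sum_(p in XY) f [set p.1; p.2]).
rewrite -(big_imset f (h := fun p : T * T => [set p.1; p.2]) (A := XY)) /=; last first.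
  move=> [x1 y1] [x2 y2] /andP[/= x1X y1Y] /andP[/= x2X y2Y] /= E.
  have : x1 \in [set x2; y2] by rewrite -E !inE eqxx.
  rewrite !inE => /orP[/eqP -> | /eqP ex]; last by rewrite -ex XnY in y2Y.
  have : y1 \in [set x2; y2] by rewrite -E !inE eqxx orbT.
  by rewrite !inE => /orP[/eqP ey | /eqP -> //]; rewrite ey XnY in y1Y.
apply: eq_bigl => e; apply/idP/imsetP => [|[[x y] /andP[/= xX yY] ->]].
  case/and4P => sXY /cards2P[x [y [xy ee]]] nX nY; subst e.
  have: (x \in X :|: Y) && (y \in X :|: Y) by rewrite -!sub1set -subUset.
  rewrite !inE => /andP[/orP[xX|xY] /orP[yX|yY]].
  - by case/negP: nX; rewrite subUset !sub1set xX yX.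
  - by exists (x, y); rewrite ?inE /= ?xX ?yY.
  - by exists (y, x); rewrite ?inE /= ?xY ?yX // setUC.
  - by case/negP: nY; rewrite subUset !sub1set xY yY.
have xy : x != y by apply: contraTneq yY => <-; rewrite XnY.
by rewrite !subUset !sub1set !inE xX yY orbT cards2 xy (XnY _ xX) (YnX _ yY).
Qed.

Lemma pairsum_setU X Y f : [disjoint X & Y] ->
  pairsum (X :|: Y) f = pairsum X f + pairsum Y f + \sum_(x in X) \sum_(y in Y) f [set x; y].
Proof.
move=> dXY; rewrite /pairsum (bigID (fun e : {set T} => e \subset X)) /=.
rewrite [X in _ + X](bigID (fun e : {set T} => e \subset Y)) /= addrA -sum_mixed_pairs //.
congr (_ + _ + _); apply: eq_bigl => e.
- case: (boolP (e \subset X)) => sX; rewrite ?andbF ?andbT //.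
  by rewrite (subset_trans sX (subsetUl _ _)).
- case: (boolP (e \subset Y)) => sY; rewrite ?andbF ?andbT //.
  rewrite (subset_trans sY (subsetUr _ _)) /=; case: (boolP (#|e| == 2)%N) => // /eqP c2.
  apply/negP => sX; move: c2; suff -> : e = set0 by rewrite cards0.
  by apply/eqP; rewrite -subset0 -(disjoint_setI0 dXY) subsetI sX sY.
- by rewrite -!andbA.
Qed.

Definition wset_on V w S : int :=
  \sum_(u in S) wv w u + \sum_(u in S) \sum_(v in V :\: S) wo w u v
  + pairsum (V :\: S) (wu w).

Lemma wsetE (G : trigraph T) w S : wset G w S = wset_on (tV G) w S.
Proof. by []. Qed.

Definition cross_weight X Z w S : int :=
  \sum_(u in S :&: X) \sum_(v in Z :\: S) wo w u v
  + \sum_(u in S :&: Z) \sum_(v in X :\: S) wo w u v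
  + \sum_(x in X :\: S) \sum_(z in Z :\: S) wu w [set x; z].

Lemma wset_on_setU X Z w S : [disjoint X & Z] -> S \subset X :|: Z ->
  wset_on (X :|: Z) w S
  = wset_on X w (S :&: X) + wset_on Z w (S :&: Z) + cross_weight X Z w S.
Proof.
move=> dXZ sS.
have eS : S = (S :&: X) :|: (S :&: Z) by rewrite -setIUr; apply/esym/setIidPl.
have dS : [disjoint S :&: X & S :&: Z] by apply: disjointW dXZ; apply: subsetIr.
have dD : [disjoint X :\: S & Z :\: S] by apply: disjointW dXZ; apply: subsetDl.
have DX (Q : {set T}) : Q :\: (S :&: Q) = Q :\: S by rewrite setDIr setDv setU0.
rewrite /wset_on /cross_weight !DX setDUl (pairsum_setU _ dD) {1 2}eS !sum_setU //.
have sumD (Q : {set T}) : \sum_(u in Q) \sum_(v in X :\: S :|: Z :\: S) wo w u v =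
  \sum_(u in Q) \sum_(v in X :\: S) wo w u v + \sum_(u in Q) \sum_(v in Z :\: S) wo w u v.
  by rewrite -big_split /=; apply: eq_bigr => u _; rewrite sum_setU.
rewrite !sumD; ring.
Qed.

Lemma cross_weight_setUr X Y Z w S : [disjoint Y & Z] ->
  cross_weight X (Y :|: Z) w S = cross_weight X Y w S + cross_weight X Z w S.
Proof.
move=> dYZ.
have dD : [disjoint Y :\: S & Z :\: S] by apply: disjointW dYZ; apply: subsetDl.
have dI : [disjoint S :&: Y & S :&: Z] by apply: disjointW dYZ; apply: subsetIr.
rewrite /cross_weight setDUl setIUr sum_setU //.
have sumD (Q : {set T}) (F : T -> T -> int) :
  \sum_(u in Q) \sum_(v in Y :\: S :|: Z :\: S) F u v =
  \sum_(u in Q) \sum_(v in Y :\: S) F u v + \sum_(u in Q) \sum_(v in Z :\: S) F u v.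
  by rewrite -big_split /=; apply: eq_bigr => u _; rewrite sum_setU.
rewrite (sumD _ (wo w)) (sumD _ (fun x z => wu w [set x; z])); ring.
Qed.

Lemma cross_weight_setI X Z w S :
  cross_weight X Z w (S :&: (X :|: Z)) = cross_weight X Z w S.
Proof.
have IX (Q : {set T}) : Q \subset X :|: Z -> S :&: (X :|: Z) :&: Q = S :&: Q.
  by move=> sQ; rewrite -setIA (setIidPr sQ).
have DX (Q : {set T}) : Q \subset X :|: Z -> Q :\: (S :&: (X :|: Z)) = Q :\: S.
  move=> sQ; rewrite setDIr (_ : Q :\: (X :|: Z) = set0) ?setU0 //.
  by apply/eqP; rewrite setD_eq0.
by rewrite /cross_weight !IX ?DX ?subsetUl ?subsetUr.
Qed.

Lemma cross_weight_eq0 X Z w S :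
  (forall x z, x \in X -> z \in Z -> [/\ wo w x z = 0, wo w z x = 0 & wu w [set x; z] = 0]) ->
  cross_weight X Z w S = 0.
Proof.
move=> w0; rewrite /cross_weight !big1 ?addr0 // => u; rewrite inE => /andP[_ uQ];
  apply: big1 => v; rewrite inE => /andP[_ vQ];
  first [by have [] := w0 _ _ uQ vQ | by have [] := w0 _ _ vQ uQ].
Qed.

Definition wv_ge0 V w := {in V, forall u, 0 <= wv w u}.
Definition wo_bounded V w :=
  {in V &, forall u v, u != v -> 0 <= wo w u v <= wu w [set u; v]}.

Lemma is_weight_wv_ge0 (G : trigraph T) w : is_weight G w -> wv_ge0 (tV G) w.
Proof. by case. Qed.

Lemma is_weight_wo_bounded (G : trigraph T) w : is_weight G w -> wo_bounded (tV G) w.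
Proof. by case=> _ ok u v uV vV uv; have [wo0 _ wo_wu _] := ok u v uV vV uv; apply/andP. Qed.

Lemma pairsum_ge0 V X w : X \subset V -> wo_bounded V w -> 0 <= pairsum X (wu w).
Proof.
move=> sXV ok; apply: sumr_ge0 => e /andP[sX /cards2P[x [y [xy ee]]]]; subst e.
have /andP[xV yV] : (x \in V) && (y \in V).
  by rewrite -!sub1set -subUset (subset_trans sX sXV).
by have /andP[wo0 /(le_trans wo0)] := ok x y xV yV xy.
Qed.

Lemma wset_on_ge V S w : S \subset V -> wo_bounded V w ->
  \sum_(u in S) wv w u <= wset_on V w S.
Proof.
move=> sSV ok; rewrite /wset_on -addrA lerDl addr_ge0 ?(pairsum_ge0 _ ok) ?subsetDl //.
apply: sumr_ge0 => u uS; apply: sumr_ge0 => v; rewrite inE => /andP[vS vV].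
have uv : u != v by apply: contraNneq vS => <-.
by case/andP: (ok u v (subsetP sSV u uS) vV uv).
Qed.

Lemma wset_on_ge0 V S w : S \subset V -> wv_ge0 V w -> wo_bounded V w ->
  0 <= wset_on V w S.
Proof.
move=> sSV wv0 ok; apply: le_trans (wset_on_ge sSV ok); apply: sumr_ge0 => u uS.
exact/wv0/(subsetP sSV).
Qed.

Lemma wset_on_setD1_le V S w u : S \subset V -> wo_bounded V w -> u \in S ->
  wset_on V w S <= wset_on V w (S :\ u) + wv w u.
Proof.
move=> sSV ok uS; have uV := subsetP sSV u uS.
have eD : V :\: (S :\ u) = (V :\: S) :|: [set u].
  by rewrite setDDr (setIidPr _ : V :&: [set u] = _) // sub1set.
have dD : [disjoint V :\: S & [set u]] by rewrite disjoint_sym disjoints1 !inE uS.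
rewrite /wset_on eD (pairsum_setU _ dD) [pairsum [set u] _]pairsum_small ?cards1 // addr0.
rewrite (big_setD1 _ uS) (big_setD1 u uS) /=.
have wo_le : \sum_(x in S :\ u) \sum_(v in V :\: S) wo w x v <=
             \sum_(x in S :\ u) \sum_(v in V :\: S :|: [set u]) wo w x v.
  apply: ler_sum => x /setD1P[xu xS]; rewrite sum_setU // big_set1 lerDl.
  by case/andP: (ok x u (subsetP sSV x xS) uV xu).
have wo_wu : \sum_(v in V :\: S) wo w u v
             <= \sum_(x in V :\: S) \sum_(y in [set u]) wu w [set x; y].
  apply: ler_sum => x /setDP[xV xS]; rewrite big_set1 setUC.
  have ux : u != x by apply: contraNneq xS => <-.
  by case/andP: (ok u x uV xV ux).
lra.
Qed.

Lemma wset_on_drop_weight0 V Y Z w : wo_bounded V w -> Z \subset Y -> Y \subset V ->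
  {in Y :\: Z, forall u, wv w u = 0} -> wset_on V w Y <= wset_on V w Z.
Proof.
move=> ok; have [n] := ubnP #|Y|; elim: n Y => // n IH Y ltYn sZY sYV w0.
case: (set_0Vmem (Y :\: Z)) => [/eqP | [u uYZ]].
  by rewrite setD_eq0 => sYZ; rewrite (_ : Y = Z) //; apply/eqP; rewrite eqEsubset sYZ.
have /setDP[uY uZ] := uYZ.
apply: le_trans (wset_on_setD1_le sYV ok uY) _; rewrite w0 // addr0.
apply: IH; rewrite ?(subset_trans (subsetDl _ _) sYV) //.
- by move: ltYn; rewrite (cardsD1 u Y) uY.
- apply/subsetP => x xZ; rewrite !inE (subsetP sZY x xZ) andbT.
  by apply: contraNneq uZ => <-.
- by move=> x; rewrite !inE => /andP[xZ /andP[_ xY]]; apply: w0; rewrite inE xZ.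
Qed.

Definition clear_on C w : weights T :=
  Weights (fun u => if u \in C then 0 else wv w u)
          (fun u v => if (u \in C) && (v \in C) then 0 else wo w u v)
          (fun e => if e \subset C then 0 else wu w e).

Lemma wset_on_clear_on B C w Y : [disjoint B & C] -> Y \subset B :|: C ->
  wset_on (B :|: C) w Y = wset_on (B :|: C) (clear_on C w) Y + wset_on C w (Y :&: C).
Proof.
move=> dBC sY; rewrite !wset_on_setU //.
have BnC x : x \in B -> x \in C = false by move=> xB; rewrite (disjointFr dBC xB).
have pairBnC x y : x \in B -> [set x; y] \subset C = false.
  by move=> xB; rewrite subUset sub1set BnC.
have -> : wset_on C (clear_on C w) (Y :&: C) = 0.
  rewrite /wset_on /pairsum /= big1 => [|u /setIP[_ uC]]; last by rewrite uC.
  rewrite big1 => [|u /setIP[_ uC]]; last by apply: big1 => v /setDP[vC _]; rewrite uC vC.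
  rewrite big1 => [|e /andP[sC _]]; last by rewrite (subset_trans sC (subsetDl _ _)).
  by rewrite !addr0.
have -> : wset_on B (clear_on C w) (Y :&: B) = wset_on B w (Y :&: B).
  rewrite /wset_on /pairsum /=; congr (_ + _ + _).
  - by apply: eq_bigr => u /setIP[_ uB]; rewrite BnC.
  - by apply: eq_bigr => u /setIP[_ uB]; apply: eq_bigr => v _; rewrite BnC.
  - apply: eq_bigr => e /andP[sB /cards2P[x [y [_ ee]]]]; subst e.
    by rewrite pairBnC // (subsetP (subset_trans sB (subsetDl _ _))) // !inE eqxx.
have -> : cross_weight B C (clear_on C w) Y = cross_weight B C w Y.
  rewrite /cross_weight /=; congr (_ + _ + _).
  - by apply: eq_bigr => u /setIP[_ uB]; apply: eq_bigr => v _; rewrite BnC.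
  - by apply: eq_bigr => u _; apply: eq_bigr => v /setDP[vB _]; rewrite (BnC v vB) andbF.
  - by apply: eq_bigr => x /setDP[xB _]; apply: eq_bigr => z _; rewrite pairBnC.
ring.
Qed.

Lemma wo_bounded_clear_on V C w : wo_bounded V w -> wo_bounded V (clear_on C w).
Proof.
move=> ok u v uV vV uv /=; rewrite subUset !sub1set.
by case: ((u \in C) && (v \in C)) => //=; apply: ok.
Qed.

Lemma wset_on_clear_on_eq V C w1 w2 S :
  (forall u, u \notin C -> wv w1 u = wv w2 u) ->
  (forall u v, ~~ ((u \in C) && (v \in C)) -> wo w1 u v = wo w2 u v) ->
  (forall e : {set T}, ~~ (e \subset C) -> wu w1 e = wu w2 e) ->
  wset_on V (clear_on C w1) S = wset_on V (clear_on C w2) S.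
Proof.
move=> ev eo eu; rewrite /wset_on /pairsum /=; congr (_ + _ + _).
- by apply: eq_bigr => u _; case: ifPn => // /ev.
- by apply: eq_bigr => u _; apply: eq_bigr => v _; case: ifPn => // /eo.
- by apply: eq_bigr => e _; case: ifPn => // /eu.
Qed.

End WeightedSets.

Section StableSets.

Variable T : finType.
Implicit Types (G : trigraph T) (w : weights T) (R S X : {set T}).

Lemma stableP G S :
  reflect (S \subset tV G /\ {in S &, forall u v, u != v -> tadj G [set u; v] <= 0})
          (stable G S).
Proof.
apply: (iffP andP) => -[sSV adj]; split=> //.
  by move=> u v uS vS; move/forall_inP/(_ u uS)/forall_inP/(_ v vS)/implyP: adj.
by apply/forall_inP => u uS; apply/forall_inP => v vS; apply/implyP/adj.
Qed.

Lemma stable0 G : stable G set0.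
Proof. by apply/stableP; split=> [|u]; rewrite ?sub0set ?inE. Qed.

Lemma stableS G S X : X \subset S -> stable G S -> stable G X.
Proof.
move=> sXS /stableP[sSV adj]; apply/stableP; split; first exact: subset_trans sSV.
by move=> u v /(subsetP sXS) uS /(subsetP sXS) vS; apply: adj.
Qed.

Lemma stable_induced G R S : R \subset tV G ->
  stable (induced G R) S = (S \subset R) && stable G S.
Proof.
by move=> sRV; rewrite /stable /=; case: (boolP (S \subset R)) => //= /subset_trans ->.
Qed.

Lemma stable_GX G X (c1 c2 : T) S :
  X :|: [set c1; c2] \subset tV G -> tadj G [set c1; c2] <= 0 ->
  stable (GX G X c1 c2) S = (S \subset X :|: [set c1; c2]) && stable G S.
Proof.
move=> sXV adjC; apply/stableP/andP => [[sS adj] | [sS /stableP[_ adj]]]; split=> //.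
  apply/stableP; split=> [|u v uS vS uv]; first exact: subset_trans sXV.
  by move: (adj u v uS vS uv) => /=; case: eqP => [->|].
by move=> u v uS vS uv /=; case: eqP => // _; apply: adj.
Qed.

Lemma wset_le_alpha G w S : stable G S -> wset G w S <= alpha G w.
Proof. by move=> stS; rewrite /alpha (bigD1 S) //= le_max lexx. Qed.

Lemma alpha_witness G w :
  0 <= wset G w set0 -> exists2 S, stable G S & alpha G w <= wset G w S.
Proof.
move=> ge0; apply: (big_ind (fun a => exists2 S, stable G S & a <= wset G w S)).
- by exists set0; first exact: stable0.
- by move=> a b [Sa ? ?] [Sb ? ?]; case: (leP a b) => _; [exists Sb | exists Sa].
- by move=> S stS; exists S.
Qed.

Definition red_loss G w R u : int :=
  \sum_(v in tV G :\: R) (wu w [set u; v] - wo w u v).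

Lemma wset_red_Ext G w R S : R \subset tV G -> S \subset R ->
  wset_on R (red_w G w R) S + Ext G w R
  = wset G w S + \sum_(u in S) (wv (red_w G w R) u - (wv w u - red_loss G w R u)).
Proof.
move=> sRV sSR; set D := tV G :\: R.
have eV : R :|: D = tV G by rewrite -[RHS](setID (tV G) R) (setIidPr sRV).
have dRD : [disjoint R & D] by rewrite disjoint_sym disjoints_subset /D setDE subsetIr.
have DS : D :\: S = D.
  by apply/setDidPl; apply: disjointWr sSR _; rewrite disjoint_sym.
have SD : S :&: D = set0 by apply: disjoint_setI0; apply: disjointWl sSR dRD.
rewrite wsetE -eV wset_on_setU ?(subset_trans sSR (subsetUl _ _)) //.
rewrite (setIidPl sSR) SD /cross_weight (setIidPl sSR) SD DS /Ext -/D.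
have -> : \sum_(x in R) \sum_(v in D) wu w [set x; v]
    = \sum_(u in S) \sum_(v in D) wu w [set u; v]
      + \sum_(x in R :\: S) \sum_(v in D) wu w [set x; v].
  rewrite -{1}(setID R S) (setIidPr sSR) sum_setU //.
  by rewrite disjoint_sym disjoints_subset setDE subsetIr.
rewrite /wset_on setD0 !big_set0 /red_loss -/D.
rewrite [X in _ = _ + X](eq_bigr (fun u => wv (red_w G w R) u - wv w u
    + \sum_(v in D) wu w [set u; v] - \sum_(v in D) wo w u v)); last first.
  by move=> u _; rewrite sumrB; ring.
rewrite sumrB big_split sumrB /=; ring.
Qed.

Lemma wset_le_alpha_red G w R X : R \subset tV G -> X \subset R -> stable G X ->
  wset G w X <= alpha_red G w R.
Proof.
move=> sRV sXR stX; rewrite /alpha_red.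
have stXR : stable (induced G R) X by rewrite stable_induced // sXR.
apply: le_trans (lerD (wset_le_alpha (red_w G w R) stXR) (lexx (Ext G w R))).
rewrite wsetE /= wset_red_Ext // lerDl; apply: sumr_ge0 => u _.
by rewrite subr_ge0 le_max lexx.
Qed.

(* Shrinking a stable set of the reduction to the vertices whose weight was not clipped
   to 0 loses no reduced weight, and on such a set reduced plus exterior weight is exactly
   the weight in (G, w). *)
Lemma alpha_red_le G w R (M : int) : R \subset tV G -> wo_bounded (tV G) w ->
  (forall X, X \subset R -> stable G X -> wset G w X <= M) -> alpha_red G w R <= M.
Proof.
move=> sRV ok leM; rewrite /alpha_red.
have okR : wo_bounded R (red_w G w R) := sub_in2 (subsetP sRV) ok.
have wv0 : wv_ge0 R (red_w G w R) by move=> u _; rewrite /= le_max lexx orbT.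
have [S] := alpha_witness (G := induced G R) (wset_on_ge0 (sub0set _) wv0 okR).
rewrite stable_induced // => /andP[sSR stS] leS.
pose X := [set u in S | red_loss G w R u <= wv w u].
have sXS : X \subset S by apply/subsetP => u; rewrite inE => /andP[].
have sXR := subset_trans sXS sSR.
apply: le_trans (lerD leS (lexx _)) _; rewrite wsetE /=.
apply: le_trans (lerD (wset_on_drop_weight0 okR sXS sSR _) (lexx _)) _.
  move=> u /setDP[uS]; rewrite /X inE uS -ltNge => lt_wv.
  by apply/max_idPr; rewrite subr_le0 ltW.
rewrite wset_red_Ext // big1 ?addr0; first exact/leM/(stableS sXS).
move=> u; rewrite inE => /andP[_ le_loss].
by rewrite /= (max_idPl _) ?subr_ge0 // subrr.
Qed.

Lemma alpha_red_setU1_le G w R u : R :|: [set u] \subset tV G ->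
  wv_ge0 (tV G) w -> wo_bounded (tV G) w ->
  alpha_red G w (R :|: [set u]) <= alpha_red G w R + wv w u.
Proof.
move=> sRuV wv0 ok; have sRV := subset_trans (subsetUl R [set u]) sRuV.
have uV : u \in tV G by apply: (subsetP sRuV); rewrite !inE eqxx orbT.
apply: alpha_red_le => // X sX stX.
have sXu : X :\ u \subset R.
  by apply/subsetP => x /setD1P[xu /(subsetP sX)]; rewrite !inE (negbTE xu) orbF.
have le_Xu := wset_le_alpha_red w sRV sXu (stableS (subsetDl _ _) stX).
case: (boolP (u \in X)) => uX.
  by apply: le_trans (wset_on_setD1_le (subset_trans sX sRuV) ok uX) _; rewrite lerD2r.
have -> : X = X :\ u by apply/esym/setDidPl; rewrite disjoint_sym disjoints1.
by rewrite -[wset G w _]addr0 lerD ?wv0.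
Qed.

End StableSets.

Section CutPartition.

Variables (T : finType) (G : trigraph T) (w : weights T) (A B : {set T}) (c1 c2 : T).
Implicit Types (R S X Y Z : {set T}).

Local Notation C := [set c1; c2].
Local Notation GA := (GX G A c1 c2).
Local Notation GB := (GX G B c1 c2).
Local Notation w_B := (wB G w A c1 c2).
Local Notation alphaA R := (alpha_red GA w R).

Hypothesis weight_w : is_weight G w.
Hypothesis c12 : c1 != c2.
Hypothesis cutABC : cut_partition G A B C.
Hypothesis stable_C : stable G C.

Let V_cut : tV G = A :|: (B :|: C).
Proof. by case: cutABC => <- _ _ _ _; apply/esym/setUA. Qed.
Let dAB : [disjoint A & B]. Proof. by case: cutABC => _ /and3P[]. Qed.
Let dAC : [disjoint A & C]. Proof. by case: cutABC => _ /and3P[]. Qed.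
Let dBC : [disjoint B & C]. Proof. by case: cutABC => _ /and3P[]. Qed.
Let adj_AB a b : a \in A -> b \in B -> tadj G [set a; b] = -1.
Proof. by case: cutABC => _ _ _ _; apply. Qed.

Let dA_BC : [disjoint A & B :|: C].
Proof. by rewrite -setI_eq0 setIUr (disjoint_setI0 dAB) (disjoint_setI0 dAC) setU0. Qed.
Let dB_AC : [disjoint B & A :|: C].
Proof.
by rewrite -setI_eq0 setIUr setIC (disjoint_setI0 dAB) (disjoint_setI0 dBC) setU0.
Qed.

Let sAC_V : A :|: C \subset tV G. Proof. by rewrite V_cut setUS // subsetUr. Qed.
Let sBC_V : B :|: C \subset tV G. Proof. by rewrite V_cut subsetUr. Qed.

Let wv0 : wv_ge0 (tV G) w := is_weight_wv_ge0 weight_w.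
Let ok : wo_bounded (tV G) w := is_weight_wo_bounded weight_w.
Let okA : wo_bounded (A :|: C) w := sub_in2 (subsetP sAC_V) ok.

Let adj_C : tadj G C <= 0.
Proof. by case/stableP: stable_C => _; apply; rewrite ?inE ?eqxx ?orbT. Qed.

Lemma stable_GA S : stable GA S = (S \subset A :|: C) && stable G S.
Proof. exact: stable_GX sAC_V adj_C. Qed.

Lemma stable_GB S : stable GB S = (S \subset B :|: C) && stable G S.
Proof. exact: stable_GX sBC_V adj_C. Qed.

Lemma cross_weight_A_B S : cross_weight A B w S = 0.
Proof.
apply: cross_weight_eq0 => a b aA bB; have [_ okw] := weight_w.
have ab : a != b by apply: contraTneq bB => <-; rewrite (disjointFr dAB aA).
have [aV bV] : a \in tV G /\ b \in tV G by rewrite V_cut !inE aA bB !orbT.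
have ba : b != a by rewrite eq_sym.
have adj_ab : tadj G [set a; b] != 0 by rewrite adj_AB.
have adj_ba : tadj G [set b; a] != 0 by rewrite setUC adj_AB.
have [_ _ _ /(_ adj_ab)[-> ->]] := okw a b aV bV ab.
by have [_ _ _ /(_ adj_ba)[-> _]] := okw b a bV aV ba.
Qed.

Lemma wset_cut S : S \subset tV G ->
  wset G w S = wset_on (A :|: C) w (S :&: (A :|: C))
               + wset_on (B :|: C) (clear_on C w) (S :&: (B :|: C)).
Proof.
rewrite wsetE V_cut => sS.
have SI X Y : Y \subset X -> S :&: X :&: Y = S :&: Y.
  by move=> sYX; rewrite -setIA (setIidPr sYX).
rewrite [wset_on (A :|: _) w S]wset_on_setU // cross_weight_setUr // cross_weight_A_B add0r.
rewrite [wset_on (B :|: C) w _](wset_on_clear_on w dBC (subsetIr _ _)).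
rewrite [wset_on (A :|: C) w _]wset_on_setU ?subsetIr // cross_weight_setI.
by rewrite !SI ?subsetUl ?subsetUr //; ring.
Qed.

Lemma wset_on_C_wB Z : Z \subset C -> wset_on C w_B Z = alphaA (A :|: Z).
Proof.
have C1 : C :\: [set c1] = [set c2].
  apply/setP => x; rewrite !inE.
  by case: (eqVneq x c1) => [->|] //=; rewrite (negbTE c12).
have C2 : C :\: [set c2] = [set c1].
  apply/setP => x; rewrite !inE.
  by case: (eqVneq x c2) => [->|] //=; rewrite ?orbF // eq_sym (negbTE c12).
case/subset_set2_cases => ->.
- by rewrite /wset_on !big_set0 setD0 pairsum_pair // /wB /= eqxx add0r setU0.
- rewrite /wset_on !big_set1 C1 big_set1 pairsum_small ?cards1 // /wB /= !eqxx /=; ring.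
- rewrite /wset_on !big_set1 C2 big_set1 pairsum_small ?cards1 // /wB /= !eqxx.
  by rewrite [c2 == c1]eq_sym (negbTE c12) /=; ring.
- rewrite /wset_on setDv big_setU1 /=; last by rewrite inE.
  rewrite big_set1 big1 ?pairsum_small ?cards0 // => [|u _]; last by rewrite big_set0.
  by rewrite /wB /= !eqxx [c2 == c1]eq_sym (negbTE c12) /=; ring.
Qed.

Lemma wset_GB_wB Y : Y \subset B :|: C ->
  wset GB w_B Y = wset_on (B :|: C) (clear_on C w) Y + alphaA (A :|: (Y :&: C)).
Proof.
move=> sY; rewrite wsetE /= (wset_on_clear_on _ dBC sY) wset_on_C_wB ?subsetIr //.
congr (_ + _); apply: wset_on_clear_on_eq => [u | u v | e] /=.
- by rewrite !inE negb_or => /andP[/negbTE-> /negbTE->].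
- move=> nC; case: ifP => [/andP[/eqP eu /eqP ev] | _].
    by rewrite eu ev !inE !eqxx orbT in nC.
  case: ifP => // /andP[/eqP eu /eqP ev].
  by rewrite eu ev !inE !eqxx orbT in nC.
- by case: eqP => // ->; rewrite subxx.
Qed.

Lemma wB_C_bounds :
  [/\ 0 <= alphaA (A :|: C) - wv w c2,
      0 <= alphaA (A :|: [set c1]) - alphaA (A :|: C) + wv w c2 <= alphaA A
    & 0 <= alphaA (A :|: [set c2]) - wv w c2 <= alphaA A].
Proof.
have wv0A : wv_ge0 (tV GA) w := sub_in1 (subsetP sAC_V) wv0.
have sum_le R X : R \subset A :|: C -> X \subset R -> stable G X ->
    \sum_(u in X) wv w u <= alphaA R.
  move=> sR sXR stX; have sX := subset_trans sXR sR.
  apply: le_trans (wset_on_ge sX okA) (wset_le_alpha_red (G := GA) w sR sXR _).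
  by rewrite stable_GA sX.
have step R u : R :|: [set u] \subset A :|: C -> alphaA (R :|: [set u]) <= alphaA R + wv w u.
  by move=> sR; apply: alpha_red_setU1_le.
have sA1 : A :|: [set c1] \subset A :|: C by rewrite setUS // sub1set !inE eqxx.
have sA2 : A :|: [set c2] \subset A :|: C by rewrite setUS // sub1set !inE eqxx orbT.
have st2 : stable G [set c2] by apply: stableS stable_C; rewrite sub1set !inE eqxx orbT.
have A_ge0 : 0 <= alphaA A.
  by move: (sum_le A set0 (subsetUl _ _) (sub0set _) (stable0 _)); rewrite big_set0.
have c2_le R : c2 \in R -> R \subset A :|: C -> wv w c2 <= alphaA R.
  by move=> c2R sR; have := sum_le R [set c2] sR; rewrite big_set1 sub1set; apply.
have c2_AC : wv w c2 <= alphaA (A :|: C) by rewrite c2_le // !inE eqxx !orbT.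
have c2_A2 : wv w c2 <= alphaA (A :|: [set c2]) by rewrite c2_le // !inE eqxx !orbT.
have C_AC : wv w c1 + wv w c2 <= alphaA (A :|: C).
  have := sum_le (A :|: C) C (subxx _) (subsetUr _ _) stable_C.
  by rewrite big_setU1 ?big_set1 // inE.
have AC_A1 : alphaA (A :|: C) <= alphaA (A :|: [set c1]) + wv w c2.
  by have := step (A :|: [set c1]) c2; rewrite -setUA; apply.
have A1_A := step A c1 sA1.
have A2_A := step A c2 sA2.
by split; [lra | apply/andP; split; lra | apply/andP; split; lra].
Qed.

Lemma is_weight_wB : is_weight GB w_B.
Proof.
have [le_c1 /andP[ge0_12 le_12] /andP[ge0_21 le_21]] := wB_C_bounds.
have [_ okw] := weight_w.
have CV : {subset C <= tV G} by apply/subsetP; apply: subset_trans sAC_V; apply: subsetUr.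
have BCV : {subset B :|: C <= tV G} by apply/subsetP.
split=> [u uBC | u v uBC vBC uv] /=.
  case: eqP => _; first lra.
  by case: eqP => _; apply/wv0; [apply: CV; rewrite !inE eqxx orbT | apply: BCV].
case: (boolP ((u == c1) && (v == c2))) => [/andP[/eqP-> /eqP->] | n12].
  by rewrite !eqxx /=; split=> //; lra.
case: (boolP ((u == c2) && (v == c1))) => [/andP[/eqP-> /eqP->] | n21].
  by rewrite [[set c2; c1]]setUC eqxx /=; split=> //; lra.
have -> : ([set u; v] == C) = false.
  by apply/negbTE/eqP => /(eq_set2 uv); rewrite (negbTE n12) (negbTE n21).
by apply: okw; [apply: BCV | apply: BCV |].
Qed.

Lemma alpha_le_alpha_GB : alpha G w <= alpha GB w_B.
Proof.
have [S stS leS] := alpha_witness (wset_on_ge0 (sub0set _) wv0 ok).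
have /stableP[sSV _] := stS.
have stSX X : stable G (S :&: X) by apply: stableS stS; apply: subsetIl.
apply: le_trans leS _; rewrite wset_cut //.
have stY : stable GB (S :&: (B :|: C)) by rewrite stable_GB subsetIr stSX.
apply: le_trans (wset_le_alpha w_B stY); rewrite wset_GB_wB ?subsetIr // addrC lerD2l.
rewrite -setIA (setIidPr (subsetUr B C)).
apply: (wset_le_alpha_red (G := GA)); first by rewrite /= setUS ?subsetIr.
  by apply/subsetP => x; rewrite !inE => /andP[xS /orP[-> // | xC]]; rewrite xS xC orbT.
by rewrite stable_GA subsetIr stSX.
Qed.

Lemma stable_glue X Y : X \subset A :|: (Y :&: C) -> stable G X -> stable GB Y ->
  stable G (X :|: Y :&: B).
Proof.
move=> sX /stableP[sXV adjX]; rewrite stable_GB => /andP[_ /stableP[sYV adjY]].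
apply/stableP; split=> [|u v]; first by rewrite subUset sXV (subset_trans (subsetIl _ _)).
have mixed x y : x \in X -> y \in Y :&: B -> x != y -> tadj G [set x; y] <= 0.
  move=> xX /setIP[yY yB] xy; case: (boolP (x \in A)) => xA; first by rewrite adj_AB.
  by apply: adjY => //; move: (subsetP sX x xX); rewrite !inE (negbTE xA) => /andP[].
move=> /setUP[uX | uYB] /setUP[vX | vYB] uv.
- exact: adjX.
- exact: mixed.
- by rewrite setUC; apply: mixed; rewrite // eq_sym.
- by case/setIP: uYB => uY _; case/setIP: vYB => vY _; apply: adjY.
Qed.

Lemma alpha_GB_le_alpha : alpha GB w_B <= alpha G w.
Proof.
have wv0B := is_weight_wv_ge0 is_weight_wB.
have okB := is_weight_wo_bounded is_weight_wB.
have [Y stY leY] := alpha_witness (wset_on_ge0 (sub0set _) wv0B okB).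
have sY : Y \subset B :|: C by move: stY; rewrite stable_GB => /andP[].
apply: le_trans leY _; rewrite wset_GB_wB // addrC -lerBrDr.
apply: alpha_red_le; [by rewrite /= setUS ?subsetIr | exact: okA | move=> X sX stX].
move: stX; rewrite stable_GA => /andP[_ stXG].
have stS := stable_glue sX stXG stY.
have /stableP[sSV _] := stS.
have sX_AC : X \subset A :|: C by apply: subset_trans sX _; rewrite setUS ?subsetIr.
have SA : (X :|: Y :&: B) :&: (A :|: C) = X.
  by rewrite setIUl (setIidPl sX_AC) -setIA (disjoint_setI0 dB_AC) setI0 setU0.
set Z := (X :|: Y :&: B) :&: (B :|: C).
have sZY : Z \subset Y.
  apply/subsetP => x /setIP[/setUP[xX | /setIP[xY _]] xBC] //.
  move: (subsetP sX x xX); rewrite in_setU (disjointFl dA_BC xBC) /=.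
  by case/setIP.
have w0 : {in Y :\: Z, forall u, wv (clear_on C w) u = 0}.
  move=> x /setDP[xY xZ] /=; case: ifPn => // xC; case/negP: xZ.
  have xB : x \in B by move: (subsetP sY x xY); rewrite in_setU (negbTE xC) orbF.
  by rewrite !inE xY xB !orbT.
have := wset_le_alpha w stS; rewrite wset_cut // SA.
have okBC : wo_bounded (B :|: C) (clear_on C w).
  exact/wo_bounded_clear_on/(sub_in2 (subsetP sBC_V) ok).
have := wset_on_drop_weight0 okBC sZY sY w0.
rewrite wsetE /=; lra.
Qed.

End CutPartition.

Unset Implicit Arguments.

Theorem lemma3p11 (T : finType) (G : trigraph T) (w : weights T)
  (A B : {set T}) (c1 c2 : T) :
  is_trigraph G -> is_weight G w ->
  c1 != c2 ->
  cut_partition G A B [set c1; c2] ->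
  stable G [set c1; c2] ->
  is_weight (GX G B c1 c2) (wB G w A c1 c2) /\
  alpha (GX G B c1 c2) (wB G w A c1 c2) = alpha G w.
Proof.
move=> _ weight_w c12 cutABC stable_C; split; first exact: is_weight_wB.
by apply/eqP; rewrite eq_le alpha_GB_le_alpha // alpha_le_alpha_GB.
Qed.
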